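(* Let $\mathcal A=\{0,1,2\}$ and $$X_{\mathcal F}=\Big\{x\in\{0,1,2\}^{\mathbb N}:\ \text{for all } i,n\in\mathbb N,\ x_ix_{i+1}\notin\{12,21\}\ \text{and}\ \#\{0\le j<n: x_{i+j}x_{i+j+1}\in\{00,11,22\}\}\le 100+\ln n\Big\},$$ with the left shift $\sigma$. Let $\mathcal G=\bigcup_{n\in\mathbb N}\{0a_10a_2\cdots0a_n: a_i\in\{1,2\}\}$. Then $\mathcal G\subset\mathcal L(X_{\mathcal F})$, $\mathcal G$ has $(W)$-specification, $\mathcal L(X_{\mathcal F})$ is edit approachable by $\mathcal G$, and $(X_{\mathcal F},\sigma)$ does not have the approximate product property.
   Context: $\{0,1,2\}^{\mathbb N}$ carries the metric $d(x,y)=\sum_{j\ge1}|x_j-y_j|2^{-j}$; $\mathcal L(X)$ is the set of finite words occurring in points of $X$. $\mathcal G\subset\mathcal L$ has $(W)$-specification if there is $\tau\in\mathbb N$ such that for all $u,v\in\mathcal G$ there is $w\in\mathcal L$ with $|w|\le\tau$ and $uwv\in\mathcal G$. The edit distance $\hat d(v,w)$ is the minimal number of single-symbol substitutions, insertions or deletions transforming $v$ into $w$; $\mathcal L$ is edit approachable by $\mathcal G$ if there is a nondecreasing $g:\mathbb N\to\mathbb N$ with $g(n)/n\to0$ such that every $w\in\mathcal L$ has $v\in\mathcal G$ with $\hat d(w,v)\le g(|w|)$. A dynamical system $(X,T)$ on a compact metric space has the approximate product property if for all $\delta_1,\delta_2,\epsilon>0$ there is $M(\delta_1,\delta_2,\epsilon)>0$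 such that for every $n\ge M$, every $k\in\mathbb N$ and all points $x_1,\dots,x_k\in X$ there exist $0=t_0<t_1<\dots<t_k$ with $n\le t_i-t_{i-1}\le(1+\delta_1)n$ and $z\in X$ such that $\#\{0\le j<n: d(T^{t_{i-1}+j}z,T^jx_i)>\epsilon\}<\delta_2n$ for each $i=1,\dots,k$. *)

From Stdlib Require Import Reals Lra Lia List Arith.
From Coquelicot Require Import Coquelicot.
Import ListNotations.
Open Scope R_scope.

Inductive sym : Type := s0 | s1 | s2.

Definition symval (a : sym) : nat :=
  match a with s0 => 0%nat | s1 => 1%nat | s2 => 2%nat end.

Definition sym_eqb (a b : sym) : bool := Nat.eqb (symval a) (symval b).

Definition point := nat -> sym.
Definition word := list sym.

(** d(x,y) = sum_{j>=1} |x_j - y_j| 2^{-j}, with x = x_1 x_2 ... stored as x 0, x 1, ... *)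
Definition dmet (x y : point) : R :=
  Series (fun j : nat => Rabs (INR (symval (x j)) - INR (symval (y j))) / 2 ^ (S j)).

Definition shift (x : point) : point := fun i => x (S i).

Definition lang (X : point -> Prop) (w : word) : Prop :=
  exists x, X x /\ exists i : nat, w = map x (seq i (length w)).

Definition n_equal_pairs (x : point) (i n : nat) : nat :=
  List.length (List.filter (fun j => sym_eqb (x (i + j)%nat) (x (i + j + 1)%nat)) (seq 0 n)).

Definition XF (x : point) : Prop :=
  (forall i : nat, ~ (x i = s1 /\ x (S i) = s2) /\ ~ (x i = s2 /\ x (S i) = s1)) /\
  (forall i n : nat, (1 <= n)%nat -> INR (n_equal_pairs x i n) <= 100 + ln (INR n)).

Definition Gset (v : word) : Prop :=
  exists a : list sym, (1 <= List.length a)%nat /\ List.Forall (fun c => c = s1 \/ c = s2) a /\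
    v = flat_map (fun c => (s0 :: c :: nil)) a.

Definition W_specification (G L : word -> Prop) : Prop :=
  exists tau : nat, forall u v, G u -> G v ->
    exists w, L w /\ (length w <= tau)%nat /\ G (u ++ w ++ v).

Inductive edit1 : word -> word -> Prop :=
  | edit_subst : forall u v a b, edit1 (u ++ a :: v) (u ++ b :: v)
  | edit_ins : forall u v a, edit1 (u ++ v) (u ++ a :: v)
  | edit_del : forall u v a, edit1 (u ++ a :: v) (u ++ v).

Inductive edit_steps : nat -> word -> word -> Prop :=
  | edit_refl : forall v, edit_steps 0 v v
  | edit_step : forall n u v w, edit_steps n u v -> edit1 v w -> edit_steps (S n) u w.

(** edit_dist_le v w k  <->  \hat d(v,w) <= k  (the edit distance is the minimal
    number of single edits, so it is <= k iff some edit sequence of length <= k exists). *)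
Definition edit_dist_le (v w : word) (k : nat) : Prop :=
  exists n, (n <= k)%nat /\ edit_steps n v w.

Definition edit_approachable (L G : word -> Prop) : Prop :=
  exists g : nat -> nat,
    (forall m n, (m <= n)%nat -> (g m <= g n)%nat) /\
    Un_cv (fun n => INR (g n) / INR n) 0 /\
    forall w, L w -> exists v, G v /\ edit_dist_le w v (g (length w)).

Definition count_gt (f : nat -> R) (eps : R) (n : nat) : nat :=
  List.length (List.filter (fun j => if Rlt_dec eps (f j) then true else false) (seq 0 n)).

Definition approx_product_property {S : Type} (X : S -> Prop) (d : S -> S -> R)
    (T : S -> S) : Prop :=
  forall d1 d2 eps : R, 0 < d1 -> 0 < d2 -> 0 < eps ->
  exists M : R, 0 < M /\
  forall (n k : nat) (xs : nat -> S), M <= INR n ->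
    (forall i, (1 <= i <= k)%nat -> X (xs i)) ->
    exists t : nat -> nat, t 0%nat = 0%nat /\
      (forall i, (1 <= i <= k)%nat ->
         (t (i - 1)%nat < t i)%nat /\
         INR n <= INR (t i - t (i - 1)%nat)%nat <= (1 + d1) * INR n) /\
      exists z, X z /\
        forall i, (1 <= i <= k)%nat ->
          INR (count_gt (fun j => d (Nat.iter (t (i - 1)%nat + j)%nat T z) (Nat.iter j T (xs i))) eps n)
            < d2 * INR n.

From Stdlib Require Import Reals Lra Lia List Arith Classical.
From Coquelicot Require Import Coquelicot.
Import ListNotations.
Open Scope R_scope.

(* In a point of X_F whose zeros and nonzeros alternate, such as 0 a_1 0 a_2 ... 0 a_n 0 1 0 1 ...,
   there is no equal pair; so G lies in the language and is closed under concatenation.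
   A word of length n of the language has at most 100 + ln n equal pairs, and the word
   0 c_1 0 c_2 ... built on its nonzero symbols c_i is reached from it by deleting or inserting
   one zero per equal pair, up to the two ends.
   Finally, let a point of X_F shadow k orbit segments of length n = 2h of the point
   0101... that flips its phase at h.  Without an equal pair inside a segment the zero pattern
   of the point has constant phase there, so it disagrees with the model on h positions;
   hence every segment contains an equal pair, and k equal pairs within O(nk) symbols
   contradict the logarithmic bound once k is of order n. *)

Lemma ln_le_sub_1 (y : R) : 0 < y -> ln y <= y - 1.
Proof.
  intro Hy. rewrite <- (ln_exp (y - 1)).
  apply ln_le; [exact Hy|]. pose proof (exp_ineq1_le (y - 1)). lra.
Qed.

Lemma ln_nonneg (y : R) : 1 <= y -> 0 <= ln y.
Proof. intro Hy. rewrite <- ln_1. apply ln_le; lra. Qed.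

Lemma ln_le_half (y : R) : 0 < y -> ln y <= y / 2.
Proof.
  intro Hy. replace (ln y) with (ln 2 + ln (y / 2)).
  - pose proof (ln_le_sub_1 2 ltac:(lra)). pose proof (ln_le_sub_1 (y / 2) ltac:(lra)). lra.
  - rewrite <- ln_mult by lra. f_equal. field.
Qed.

Lemma ln_INR_le_sqrt (n : nat) : (1 <= n)%nat -> ln (INR n) <= 2 * INR (Nat.sqrt n).
Proof.
  intro Hn. set (s := Nat.sqrt n).
  assert (Hs : (n < S s * S s)%nat) by apply Nat.sqrt_spec'.
  assert (Hs0 : 0 < INR (S s)) by (apply lt_0_INR; lia).
  apply Rle_trans with (ln (INR (S s) * INR (S s))).
  - apply ln_le; [apply lt_0_INR; lia|]. rewrite <- mult_INR. apply le_INR. lia.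
  - rewrite ln_mult by exact Hs0. pose proof (ln_le_sub_1 _ Hs0). rewrite S_INR in *. lra.
Qed.

Lemma Series_nonneg (a : nat -> R) : ex_series a -> (forall n, 0 <= a n) -> 0 <= Series a.
Proof.
  intros Ha Hpos. replace 0 with (Series (fun n => 0 * a n)) by (rewrite Series_scal_l; ring).
  apply Series_le; [|exact Ha]. intro n. rewrite Rmult_0_l. split; [lra|apply Hpos].
Qed.

Lemma length_filter_seq_S (f : nat -> bool) s n :
  length (filter f (seq (S s) n)) = length (filter (fun j => f (S j)) (seq s n)).
Proof. rewrite <- seq_shift, filter_map_swap, length_map. reflexivity. Qed.

Lemma length_filter_all (A : Type) (f : A -> bool) l :
  (forall a, In a l -> f a = true) -> length (filter f l) = length l.
Proof. intro H. rewrite forallb_filter_id; [reflexivity|]. apply forallb_forall, H. Qed.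

Lemma length_filter_none (A : Type) (f : A -> bool) l :
  (forall a, In a l -> f a = false) -> length (filter f l) = 0%nat.
Proof.
  intro H. destruct (filter f l) as [|a l'] eqn:E; [reflexivity|].
  assert (Ha : In a (filter f l)) by (rewrite E; left; reflexivity).
  apply filter_In in Ha as [Hin Hf]. rewrite H in Hf by exact Hin. discriminate.
Qed.

Lemma length_filter_ge_1 (A : Type) (f : A -> bool) l a :
  In a l -> f a = true -> (1 <= length (filter f l))%nat.
Proof.
  intros Hin Hf. assert (Ha : In a (filter f l)) by (apply filter_In; auto).
  destruct (filter f l); [contradiction|simpl; lia].
Qed.

Lemma length_filter_seq_le_1 (f : nat -> bool) j0 s n :
  (forall j, f j = true -> j = j0) -> (length (filter f (seq s n)) <= 1)%nat.
Proof.
  intro H. revert s; induction n as [|n IH]; intro s; simpl; [lia|].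
  destruct (f s) eqn:E; simpl; [|apply IH].
  apply H in E; subst s. rewrite length_filter_none; [lia|].
  intros j Hj. apply in_seq in Hj. destruct (f j) eqn:E; [|reflexivity].
  apply H in E. lia.
Qed.

Lemma length_filter_blocks (f : nat -> bool) (t : nat -> nat) k :
  t 0%nat = 0%nat ->
  (forall i, (i < k)%nat -> exists j, (t i <= j < t (S i))%nat /\ f j = true) ->
  (k <= length (filter f (seq 0 (t k))))%nat.
Proof.
  intros Ht0 Hblock. induction k as [|k IH]; [lia|].
  destruct (Hblock k ltac:(lia)) as [j [Hj Hf]].
  replace (t (S k)) with (t k + (t (S k) - t k))%nat by lia.
  rewrite seq_app, filter_app, length_app.
  pose proof (IH (fun i Hi => Hblock i ltac:(lia))).
  pose proof (length_filter_ge_1 _ f (seq (0 + t k) (t (S k) - t k)) j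
                ltac:(apply in_seq; lia) Hf).
  lia.
Qed.

Definition is_zero (c : sym) : bool := match c with s0 => true | _ => false end.

Definition no_forbidden_pair (a b : sym) : Prop := ~ (a = s1 /\ b = s2) /\ ~ (a = s2 /\ b = s1).

Lemma is_zero_false_nonzero c : is_zero c = false -> c = s1 \/ c = s2.
Proof. destruct c; simpl; auto; discriminate. Qed.

Lemma sym_eqb_true_is_zero a b : sym_eqb a b = true -> is_zero a = is_zero b.
Proof. destruct a, b; easy. Qed.

Lemma is_zero_next a b : sym_eqb a b = false -> no_forbidden_pair a b -> is_zero b = negb (is_zero a).
Proof. unfold no_forbidden_pair. destruct a, b; simpl; intros; easy || tauto. Qed.

Definition is_eq_pair (x : point) (j : nat) : bool := sym_eqb (x j) (x (S j)).

Lemma n_equal_pairs_seq x i n :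
  n_equal_pairs x i n = length (filter (is_eq_pair x) (seq i n)).
Proof.
  unfold n_equal_pairs. revert x; induction i as [|i IH]; intro x.
  - f_equal. apply filter_ext. intro j. unfold is_eq_pair. now rewrite Nat.add_1_r.
  - rewrite length_filter_seq_S. exact (IH (fun j => x (S j))).
Qed.

Lemma XF_of_le_1_equal_pair (x : point) :
  (forall i, no_forbidden_pair (x i) (x (S i))) ->
  (forall i n, (n_equal_pairs x i n <= 1)%nat) -> XF x.
Proof.
  intros Hforb Hpairs. split; [exact Hforb|].
  intros i n Hn. apply le_INR in Hn. pose proof (le_INR _ _ (Hpairs i n)).
  pose proof (ln_nonneg (INR n) Hn). simpl in *. lra.
Qed.

Definition alternating (x : point) : Prop := forall i, is_zero (x (S i)) = negb (is_zero (x i)).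

Lemma alternating_XF x : alternating x -> XF x.
Proof.
  intro Halt. apply XF_of_le_1_equal_pair.
  - intro i. specialize (Halt i). unfold no_forbidden_pair.
    destruct (x i), (x (S i)); simpl in *; try discriminate; split; intros [? ?]; discriminate.
  - intros i n. rewrite n_equal_pairs_seq, length_filter_none; [lia|].
    intros j _. destruct (is_eq_pair x j) eqn:E; [|reflexivity].
    apply sym_eqb_true_is_zero in E. rewrite Halt in E. now destruct (is_zero (x j)).
Qed.

Definition G_word (a : list sym) : word := flat_map (fun c => [s0; c]) a.

Fixpoint G_point (a : list sym) (i : nat) : sym :=
  match a, i with
  | [], _ => if Nat.even i then s0 else s1
  | _ :: _, 0 => s0
  | c :: _, 1 => c
  | _ :: a', S (S i') => G_point a' i'
  end.

Lemma is_zero_G_point a i : List.Forall (fun c => c = s1 \/ c = s2) a -> is_zero (G_point a i) = Nat.even i.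
Proof.
  intro Ha. revert i; induction Ha as [|c a Hc Ha IH]; intro i.
  - simpl. now destruct (Nat.even i).
  - destruct i as [|[|i]]; simpl; [reflexivity| |apply IH].
    now destruct Hc as [-> | ->].
Qed.

Lemma G_point_XF a : List.Forall (fun c => c = s1 \/ c = s2) a -> XF (G_point a).
Proof.
  intro Ha. apply alternating_XF. intro i.
  rewrite !is_zero_G_point by exact Ha. rewrite Nat.even_succ, <- Nat.negb_even. reflexivity.
Qed.

Lemma G_point_word a : map (G_point a) (seq 0 (length (G_word a))) = G_word a.
Proof.
  induction a as [|c a IH]; [reflexivity|].
  cbn [G_word flat_map app length seq map].
  rewrite <- !seq_shift, !map_map. cbn. f_equal. f_equal. exact IH.
Qed.

Lemma G_in_lang : forall w, Gset w -> lang XF w.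
Proof.
  intros w (a & _ & Ha & ->). exists (G_point a). split; [now apply G_point_XF|].
  exists 0%nat. symmetry. apply G_point_word.
Qed.

Lemma G_W_specification : W_specification Gset (lang XF).
Proof.
  exists 0%nat. intros u v (a & Ha1 & Ha2 & ->) (b & Hb1 & Hb2 & ->).
  exists []. split; [|split; [reflexivity|]].
  - exists (G_point []). split; [apply G_point_XF; constructor|]. now exists 0%nat.
  - exists (a ++ b). split; [rewrite length_app; lia|].
    split; [now apply List.Forall_app|]. symmetry; apply flat_map_app.
Qed.

Lemma edit_dist_le_refl w : edit_dist_le w w 0.
Proof. exists 0%nat. split; [lia|constructor]. Qed.

Lemma edit_dist_le_single v w : edit1 v w -> edit_dist_le v w 1.
Proof. intro H. exists 1%nat. split; [lia|]. econstructor; [constructor|exact H]. Qed.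

Lemma edit_dist_le_trans u v w m n :
  edit_dist_le u v m -> edit_dist_le v w n -> edit_dist_le u w (m + n).
Proof.
  intros [m' [Hm Huv]] [n' [Hn Hvw]]. exists (n' + m')%nat. split; [lia|].
  clear Hm Hn. induction Hvw as [|n'' v' w' w'' _ IH Hstep]; [exact Huv|].
  econstructor; [exact (IH Huv)|exact Hstep].
Qed.

Lemma edit_dist_le_mono v w m n : (m <= n)%nat -> edit_dist_le v w m -> edit_dist_le v w n.
Proof. intros Hmn [k [Hk H]]. exists k. split; [lia|exact H]. Qed.

Lemma edit_dist_le_cons a v w n : edit_dist_le v w n -> edit_dist_le (a :: v) (a :: w) n.
Proof.
  intros [k [Hk H]]. exists k. split; [exact Hk|]. clear Hk.
  induction H as [|k u v' w' _ IH Hstep]; [constructor|]. econstructor; [exact IH|].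
  destruct Hstep as [p q b b'|p q b|p q b];
    [apply (edit_subst (a :: p))|apply (edit_ins (a :: p))|apply (edit_del (a :: p))].
Qed.

Fixpoint n_equal_adjacent (w : word) : nat :=
  match w with
  | a :: (b :: _) as t => ((if sym_eqb a b then 1 else 0) + n_equal_adjacent t)%nat
  | _ => 0%nat
  end.

Fixpoint no_forbidden_word (w : word) : Prop :=
  match w with
  | a :: (b :: _) as t => no_forbidden_pair a b /\ no_forbidden_word t
  | _ => True
  end.

Definition head_nonzero (w : word) : nat :=
  match w with c :: _ => if is_zero c then 0 else 1 | [] => 0 end.

Definition nonzeros (w : word) : list sym := filter (fun c => negb (is_zero c)) w.

(* Without forbidden pairs, a nonzero symbol followed by a nonzero symbol is an equal pair. *)
Lemma head_nonzero_after_nonzero c r :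
  is_zero c = false -> no_forbidden_word (c :: r) ->
  (n_equal_adjacent r + head_nonzero r <= n_equal_adjacent (c :: r))%nat.
Proof.
  intros Hc Hr. destruct r as [|d r]; simpl; [lia|].
  destruct d; simpl; [lia|..]; destruct c; simpl in *; try discriminate;
    unfold no_forbidden_pair in Hr; simpl; tauto || lia.
Qed.

(* The word is cleaned into [0 c_1 0 c_2 ...] over its nonzero symbols [c_i]: every
   deleted zero and every inserted zero is paid for by an equal pair, up to the two ends. *)
Lemma edit_dist_le_nonzeros w : no_forbidden_word w ->
  edit_dist_le w (G_word (nonzeros w)) (n_equal_adjacent w + 1 + head_nonzero w).
Proof.
  induction w as [w IH] using (well_founded_ind (well_founded_ltof _ (@length sym))).
  intro Hw. destruct w as [|c r].
  - apply (edit_dist_le_mono _ _ 0); [lia|apply edit_dist_le_refl].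
  - assert (Hr : no_forbidden_word r) by (destruct r; simpl in *; tauto).
    destruct (is_zero c) eqn:Ec.
    + destruct c; try discriminate. destruct r as [|d r'].
      * apply (edit_dist_le_mono _ _ 1); [simpl; lia|].
        apply edit_dist_le_single, (edit_del [] [] s0).
      * destruct (is_zero d) eqn:Ed.
        -- destruct d; try discriminate.
           apply (edit_dist_le_mono _ _ (1 + (n_equal_adjacent (s0 :: r') + 1 + 0))); [simpl; lia|].
           apply (edit_dist_le_trans _ (s0 :: r')); [apply edit_dist_le_single, (edit_del [] (s0 :: r') s0)|].
           apply (IH (s0 :: r')); [unfold ltof; simpl; lia|exact Hr].
        -- assert (Hr' : no_forbidden_word r') by (destruct r'; simpl in *; tauto).
           pose proof (head_nonzero_after_nonzero d r' Ed Hr).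
           simpl nonzeros. rewrite Ed. cbn [negb filter G_word flat_map app].
           apply edit_dist_le_cons, edit_dist_le_cons.
           apply (edit_dist_le_mono _ _ (n_equal_adjacent r' + 1 + head_nonzero r')).
           ++ cbn [n_equal_adjacent head_nonzero is_zero]. destruct d; simpl in *; lia.
           ++ apply IH; [unfold ltof; simpl; lia|exact Hr'].
    + pose proof (head_nonzero_after_nonzero c r Ec Hw).
      simpl nonzeros. rewrite Ec. cbn [negb filter G_word flat_map app].
      apply (edit_dist_le_mono _ _ (1 + (n_equal_adjacent r + 1 + head_nonzero r))).
      * cbn [head_nonzero]. rewrite Ec. lia.
      * apply (edit_dist_le_trans _ (s0 :: c :: r)); [apply edit_dist_le_single, (edit_ins [] (c :: r) s0)|].
        apply edit_dist_le_cons, edit_dist_le_cons.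
        apply IH; [unfold ltof; simpl; lia|exact Hr].
Qed.

Lemma no_forbidden_word_XF x i L : XF x -> no_forbidden_word (map x (seq i L)).
Proof.
  intros [Hforb _]. revert i; induction L as [|[|L] IH]; intro i; [exact I|exact I|].
  split; [apply Hforb|apply (IH (S i))].
Qed.

Lemma n_equal_adjacent_window x i L :
  n_equal_adjacent (map x (seq i (S L))) = n_equal_pairs x i L.
Proof.
  rewrite n_equal_pairs_seq. revert i; induction L as [|L IH]; intro i; [reflexivity|].
  change (n_equal_adjacent (map x (seq i (S (S L)))))
    with ((if is_eq_pair x i then 1 else 0) + n_equal_adjacent (map x (seq (S i) (S L))))%nat.
  rewrite IH. simpl. now destruct (is_eq_pair x i).
Qed.

Lemma n_equal_adjacent_lang_XF w :
  lang XF w -> (n_equal_adjacent w <= 100 + 2 * Nat.sqrt (length w))%nat.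
Proof.
  intros (x & HX & i & Hw). rewrite Hw at 1. clear Hw.
  destruct (length w) as [|[|L]]; [simpl; lia|simpl; lia|].
  rewrite n_equal_adjacent_window. apply INR_le.
  destruct HX as [_ Hpairs]. pose proof (Hpairs i (S L) ltac:(lia)) as Hbound.
  pose proof (ln_INR_le_sqrt (S L) ltac:(lia)).
  pose proof (le_INR _ _ (Nat.sqrt_le_mono (S L) (S (S L)) ltac:(lia))).
  rewrite plus_INR, mult_INR. replace (INR 100) with 100 by (simpl; lra). simpl (INR 2). lra.
Qed.

Definition approach_rate (n : nat) : nat := (104 + 2 * Nat.sqrt n)%nat.

Lemma approach_rate_mono m n : (m <= n)%nat -> (approach_rate m <= approach_rate n)%nat.
Proof. intro H. unfold approach_rate. pose proof (Nat.sqrt_le_mono m n H). lia. Qed.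

(* For n >= K^2 with s = sqrt n we have rate n * s <= 106 n, hence rate n / n <= 106 / K. *)
Lemma approach_rate_sublinear : Un_cv (fun n => INR (approach_rate n) / INR n) 0.
Proof.
  intros eps Heps.
  destruct (archimed_cor1 (eps / 106) ltac:(lra)) as [K [HK HK0]].
  exists (K * K)%nat. intros n Hn. unfold R_dist. rewrite Rminus_0_r.
  set (s := Nat.sqrt n).
  assert (Hs : (K <= s)%nat) by (apply Nat.sqrt_le_square; exact Hn).
  assert (Hrate : (approach_rate n * s <= 106 * n)%nat).
  { pose proof (Nat.sqrt_spec' n). pose proof (Nat.sqrt_le_lin n). unfold approach_rate; fold s; nia. }
  apply le_INR in Hrate, Hs. rewrite !mult_INR in Hrate.
  replace (INR 106) with 106 in Hrate by (simpl; lra).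
  assert (HK1 : 0 < INR K) by (apply lt_0_INR; exact HK0).
  assert (HKeps : 106 < eps * INR K).
  { apply (Rmult_lt_compat_r (INR K)) in HK; [|exact HK1].
    rewrite Rinv_l in HK by lra. lra. }
  assert (Hn0 : 0 < INR n) by (apply lt_0_INR; nia).
  assert (Hr0 : 0 <= INR (approach_rate n)) by apply pos_INR.
  rewrite Rabs_right.
  - apply Rmult_lt_reg_r with (INR n); [exact Hn0|].
    unfold Rdiv. rewrite Rmult_assoc, Rinv_l by lra. nra.
  - apply Rle_ge, Rdiv_le_0_compat; lra.
Qed.

Lemma lang_edit_approachable : edit_approachable (lang XF) Gset.
Proof.
  exists approach_rate. split; [exact approach_rate_mono|].
  split; [exact approach_rate_sublinear|].
  intros w Hw. pose proof (n_equal_adjacent_lang_XF w Hw) as Hpairs.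
  assert (Hclean := edit_dist_le_nonzeros w
    ltac:(destruct Hw as (x & HX & i & ->); apply no_forbidden_word_XF, HX)).
  assert (Hnz : List.Forall (fun c => c = s1 \/ c = s2) (nonzeros w)).
  { apply Forall_forall. intros c Hc. apply filter_In in Hc as [_ Hc].
    apply is_zero_false_nonzero. now destruct (is_zero c). }
  assert (Hhead : (head_nonzero w <= 1)%nat) by (destruct w as [|c ?]; simpl; [|destruct (is_zero c)]; lia).
  destruct (nonzeros w) as [|c a].
  - exists (G_word [s1]). split; [exists [s1]; repeat split; auto|].
    apply (edit_dist_le_mono _ _ (n_equal_adjacent w + 1 + head_nonzero w + 2)); [unfold approach_rate; lia|].
    apply (edit_dist_le_trans _ _ _ _ _ Hclean).
    apply (edit_dist_le_trans _ [s1] _ 1 1); apply edit_dist_le_single;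
      [apply (edit_ins [] [] s1)|apply (edit_ins [] [s1] s0)].
  - exists (G_word (c :: a)). split; [exists (c :: a); repeat split; simpl; auto; lia|].
    revert Hclean. apply edit_dist_le_mono. unfold approach_rate. lia.
Qed.

Lemma iter_shift m (z : point) p : Nat.iter m shift z p = z (m + p)%nat.
Proof.
  revert p; induction m as [|m IH]; intro p; [reflexivity|].
  simpl. unfold shift at 1. rewrite IH. f_equal. lia.
Qed.

Lemma dmet_term_bounds (y y' : point) j :
  0 <= Rabs (INR (symval (y j)) - INR (symval (y' j))) / 2 ^ S j <= (/ 2) ^ j.
Proof.
  assert (Hdiff : Rabs (INR (symval (y j)) - INR (symval (y' j))) <= 2)
    by (apply Rabs_le; destruct (y j), (y' j); simpl; lra).
  assert (Hpow : 0 < 2 ^ j) by (apply pow_lt; lra).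
  rewrite pow_inv. cbn [pow]. unfold Rdiv. rewrite Rinv_mult.
  pose proof (Rinv_0_lt_compat _ Hpow). pose proof (Rabs_pos (INR (symval (y j)) - INR (symval (y' j)))).
  split; [|replace (/ 2 ^ j) with (2 * (/ 2 * / 2 ^ j)) by (field; lra)]; nra.
Qed.

Lemma ex_series_dmet (y y' : point) :
  ex_series (fun j => Rabs (INR (symval (y j)) - INR (symval (y' j))) / 2 ^ S j).
Proof.
  apply (@ex_series_le R_AbsRing R_CompleteNormedModule _ (fun j => (/ 2) ^ j)).
  - intro j. change norm with Rabs. destruct (dmet_term_bounds y y' j).
    rewrite Rabs_right by lra. assumption.
  - apply ex_series_geom. rewrite Rabs_right; lra.
Qed.

Lemma dmet_ge_half (y y' : point) : y 0%nat <> y' 0%nat -> / 2 <= dmet y y'.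
Proof.
  intro Hdiff. unfold dmet. rewrite Series_incr_1 by apply ex_series_dmet.
  assert (Hhead : 1 <= Rabs (INR (symval (y 0%nat)) - INR (symval (y' 0%nat))))
    by (destruct (y 0%nat), (y' 0%nat); simpl; try congruence; unfold Rabs; destruct Rcase_abs; lra).
  assert (Htail : 0 <= Series (fun k => Rabs (INR (symval (y (S k))) - INR (symval (y' (S k)))) / 2 ^ S (S k))).
  { apply Series_nonneg; [|intro k; apply dmet_term_bounds].
    exact (proj1 (ex_series_incr_1 _) (ex_series_dmet y y')). }
  simpl pow in *. lra.
Qed.

(** [flip_point h] is [0101...] up to position [h] and [1010...] from there on. *)
Definition flip_point (h : nat) : point :=
  fun j => if xorb (Nat.even j) (h <=? j)%nat then s0 else s1.

Lemma is_zero_flip_point h j : is_zero (flip_point h j) = xorb (Nat.even j) (h <=? j)%nat.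
Proof. unfold flip_point. now destruct (xorb _ _). Qed.

Lemma flip_point_XF h : XF (flip_point h).
Proof.
  apply XF_of_le_1_equal_pair.
  - intro i. unfold no_forbidden_pair, flip_point.
    destruct (xorb _ _), (xorb _ _); split; intros [? ?]; discriminate.
  - intros i n. rewrite n_equal_pairs_seq. apply (length_filter_seq_le_1 _ (h - 1)).
    intros j Hj. apply sym_eqb_true_is_zero in Hj as Hflip.
    rewrite !is_zero_flip_point, Nat.even_succ, <- Nat.negb_even in Hflip.
    destruct (Nat.leb_spec h j), (Nat.leb_spec h (S j)), (Nat.even j); simpl in Hflip; lia || congruence.
Qed.

Lemma is_zero_window (z : point) T n : XF z ->
  (forall j, (j + 1 < n)%nat -> is_eq_pair z (T + j) = false) ->
  forall j, (j < n)%nat -> is_zero (z (T + j)%nat) = xorb (is_zero (z T)) (negb (Nat.even j)).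
Proof.
  intros [Hforb _] Hnone. induction j as [|j IH]; intro Hj.
  - rewrite Nat.add_0_r. now destruct (is_zero (z T)).
  - rewrite Nat.add_succ_r, (is_zero_next _ _ (Hnone j ltac:(lia)) (Hforb (T + j)%nat)), IH by lia.
    rewrite Nat.even_succ, <- Nat.negb_even. now destruct (is_zero (z T)), (Nat.even j).
Qed.

(* An equal-pair-free window has constant phase, while [flip_point h] changes phase at [h]:
   the zero patterns disagree on all of [[0, h)] or on all of [[h, 2h)]. *)
Lemma flip_point_mismatches (z : point) T h : XF z ->
  (forall j, (j + 1 < 2 * h)%nat -> is_eq_pair z (T + j) = false) ->
  (h <= count_gt (fun j => dmet (Nat.iter (T + j) shift z) (Nat.iter j shift (flip_point h)))
          (/ 4) (2 * h))%nat.
Proof.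
  intros Hz Hnone.
  assert (Hfar : forall j, (j < 2 * h)%nat -> is_zero (z T) = (h <=? j)%nat ->
    (if Rlt_dec (/ 4) (dmet (Nat.iter (T + j) shift z) (Nat.iter j shift (flip_point h)))
     then true else false) = true).
  { intros j Hj Hphase. destruct Rlt_dec as [|Hle]; [reflexivity|]. exfalso. apply Hle.
    apply Rlt_le_trans with (/ 2); [lra|]. apply dmet_ge_half.
    rewrite !iter_shift, !Nat.add_0_r. intro Heq. apply (f_equal is_zero) in Heq.
    rewrite (is_zero_window z T (2 * h) Hz Hnone j Hj), is_zero_flip_point, Hphase in Heq.
    destruct (h <=? j)%nat, (Nat.even j); discriminate. }
  unfold count_gt. replace (2 * h)%nat with (h + h)%nat by lia.
  rewrite seq_app, filter_app, length_app.
  destruct (is_zero (z T)) eqn:Ephase.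
  - rewrite (length_filter_all _ _ (seq (0 + h) h)), length_seq; [lia|].
    intros j Hj. apply in_seq in Hj. apply Hfar; [lia|]. apply eq_sym, Nat.leb_le. lia.
  - rewrite (length_filter_all _ _ (seq 0 h)), length_seq; [lia|].
    intros j Hj. apply in_seq in Hj. apply Hfar; [lia|]. apply eq_sym, Nat.leb_gt. lia.
Qed.

Lemma window_has_equal_pair (z : point) T h : XF z -> (1 <= h)%nat ->
  INR (count_gt (fun j => dmet (Nat.iter (T + j) shift z) (Nat.iter j shift (flip_point h)))
         (/ 4) (2 * h)) < / 4 * INR (2 * h) ->
  exists j, (j + 1 < 2 * h)%nat /\ is_eq_pair z (T + j) = true.
Proof.
  intros Hz Hh Hfew. apply NNPP. intro Hnone.
  assert (Hnone' : forall j, (j + 1 < 2 * h)%nat -> is_eq_pair z (T + j) = false).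
  { intros j Hj. apply Bool.not_true_is_false. intro Hpair. apply Hnone. now exists j. }
  apply le_INR in Hh. pose proof (le_INR _ _ (flip_point_mismatches z T h Hz Hnone')).
  rewrite mult_INR in Hfew. simpl in *. lra.
Qed.

Lemma le_of_bounded_steps (t : nat -> nat) c k :
  (forall i, (i < k)%nat -> (t (S i) <= t i + c)%nat) -> (t k <= t 0%nat + c * k)%nat.
Proof.
  intro Hstep. induction k as [|k IH]; [lia|].
  pose proof (Hstep k ltac:(lia)). pose proof (IH (fun i Hi => Hstep i ltac:(lia))). nia.
Qed.

Lemma ln_bound_exceeded (n t : nat) : (1 <= n)%nat -> (1 <= t <= 2 * n * (2 * n + 201))%nat ->
  100 + ln (INR t) < INR (2 * n + 201).
Proof.
  intros Hn [Ht Htn]. set (k := (2 * n + 201)%nat).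
  assert (Hn0 : 0 < INR n) by (apply lt_0_INR; lia).
  assert (Hk : INR k = 2 * INR n + 201) by (unfold k; rewrite plus_INR, mult_INR; simpl; lra).
  assert (Hln : ln (INR t) <= ln (2 * INR n) + ln (INR k)).
  { rewrite <- ln_mult by lra. apply ln_le; [apply lt_0_INR; lia|].
    apply le_INR in Htn. rewrite !mult_INR in Htn. fold k in Htn. simpl (INR 2) in Htn. lra. }
  pose proof (ln_le_half (2 * INR n) ltac:(lra)). pose proof (ln_le_half (INR k) ltac:(lra)).
  lra.
Qed.

Lemma not_approx_product_property : ~ approx_product_property XF dmet shift.
Proof.
  intro Happ. destruct (Happ 1 (/ 4) (/ 4) ltac:(lra) ltac:(lra) ltac:(lra)) as [M [_ Hspec]].
  destruct (INR_unbounded M) as [N HN].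
  set (h := S N). set (n := (2 * h)%nat). set (k := (2 * n + 201)%nat).
  assert (HMn : M <= INR n) by (apply Rle_trans with (INR N); [lra|apply le_INR; unfold n, h; lia]).
  destruct (Hspec n k (fun _ => flip_point h) HMn (fun _ _ => flip_point_XF h))
    as (t & Ht0 & Hsteps & z & Hz & Hclose).
  assert (Hstep : forall i, (i < k)%nat -> (n <= t (S i) - t i <= 2 * n)%nat).
  { intros i Hi. destruct (Hsteps (S i) ltac:(lia)) as (_ & Hlo & Hhi).
    rewrite Nat.sub_succ, Nat.sub_0_r in Hlo, Hhi.
    split; apply INR_le; [exact Hlo|]. rewrite mult_INR. simpl (INR 2). lra. }
  assert (Hblock : forall i, (i < k)%nat ->
    exists j, (t i <= j < t (S i))%nat /\ is_eq_pair z j = true).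
  { intros i Hi. specialize (Hclose (S i) ltac:(lia)). rewrite Nat.sub_succ, Nat.sub_0_r in Hclose.
    destruct (window_has_equal_pair z (t i) h Hz ltac:(unfold h; lia) Hclose) as [j [Hj Hpair]].
    exists (t i + j)%nat. specialize (Hstep i Hi). split; [lia|exact Hpair]. }
  assert (Hpairs : (k <= n_equal_pairs z 0 (t k))%nat).
  { rewrite n_equal_pairs_seq. exact (length_filter_blocks _ t k Ht0 Hblock). }
  assert (Hlen : (t k <= 2 * n * k)%nat).
  { pose proof (le_of_bounded_steps t (2 * n) k ltac:(intros i Hi; specialize (Hstep i Hi); lia)). lia. }
  assert (Htk : (1 <= t k)%nat).
  { rewrite n_equal_pairs_seq in Hpairs.
    pose proof (filter_length_le (is_eq_pair z) (seq 0 (t k))). rewrite length_seq in *. lia. }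
  destruct Hz as [_ Hbound]. pose proof (Hbound 0%nat (t k) Htk).
  pose proof (ln_bound_exceeded n (t k) ltac:(unfold n, h; lia) (conj Htk Hlen)) as Hexceed.
  change (2 * n + 201)%nat with k in Hexceed. apply le_INR in Hpairs. lra.
Qed.

Theorem proposition6p1 :
  (forall w, Gset w -> lang XF w) /\
  W_specification Gset (lang XF) /\
  edit_approachable (lang XF) Gset /\
  ~ approx_product_property XF dmet shift.
Proof.
  split; [exact G_in_lang|].
  split; [exact G_W_specification|].
  split; [exact lang_edit_approachable|].
  exact not_approx_product_property.
Qed.
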